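(* Let $G$ be the complete graph on $\{0,\dots,n\}$ oriented by $i\to j$ iff $i<j$. For every spanning tree $T\in\mathbb{B}(G)$, $$p_{G\setminus T}=\sum_{s\in S_n}(-1)^{\operatorname{mm}(G\setminus T,\,s)}\,C(T,T_s)\,\mathbf{P}_s .$$
   Context: Polynomials are in variables $t=(t(1),\dots,t(n))$ with $t(0):=0$. To the edge of $G$ between $i<j$ associate $p_x(t)=t(j)-t(i)$; for a set $Y$ of edges oriented as in $G$, $p_Y:=\prod_{x\in Y}p_x$. $\mathbb{B}(G)$ is the set of spanning trees of $G$; $G\setminus T$ is the set of edges not in $T$. $S_n$ is the set of permutations of $\{1,\dots,n\}$, extended by $s(0):=0$. For $s\in S_n$, $G^s$ orients the edge $\{s(i),s(j)\}$, $i<j$, as $s(i)\to s(j)$. The path tree $T_s$ is the spanning tree with edges $\{s(k-1),s(k)\}$, $k=1,\dots,n$. $\mathbf{P}_s:=\prod(t(s(j))-t(s(i)))$ over all $0\le i<j\le n$ with $j\ne i+1$. For a set $Y$ of edges and $s\in S_n$, $\operatorname{mm}(Y,s)$ is the number of edges of $Y$ whose orientation in $G$ differs from their orientation in $G^s$ (i.e. edges $\{a,b\}$, $a<b$, with $s^{-1}(a)>s^{-1}(b)$). For $T\in\mathbb{B}(G)$: $i\prec_T j$ iff $i\neq j$ and the path in $T$ from $0$ to $j$ contains $i$; $T,T'$ are compatible if some total order on $\{0,\dots,n\}$ extends both $\prec_T$ and $\prec_{T'}$; $C(T,T')=1$ if compatible, $0$ otherwise. *)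

From HB Require Import structures.
From mathcomp Require Import all_boot all_order all_algebra fingroup perm.
From Stdlib Require Import ClassicalEpsilon.
Set Implicit Arguments. Unset Strict Implicit. Unset Printing Implicit Defensive.
Import GRing.Theory.
Local Open Scope ring_scope.

(* Vertices of G are 'I_n.+1 = {0,...,n}.  An edge {i,j}, i<j, of the complete
   graph G is stored as the oriented pair (i,j) with i < j (orientation of G). *)
Definition vtx (n : nat) := 'I_n.+1.
Definition edge (n : nat) := ('I_n.+1 * 'I_n.+1)%type.

Definition is_Gedge n (e : edge n) : bool := (e.1 < e.2)%N.

Definition edge_of n (a b : 'I_n.+1) : edge n := if (a < b)%N then (a, b) else (b, a).

Definition adj n (T : {set edge n}) : rel 'I_n.+1 :=
  fun x y => ((x, y) \in T) || ((y, x) \in T).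

Definition is_spanning_tree n (T : {set edge n}) : Prop :=
  (forall e, e \in T -> is_Gedge e) /\
  (forall x y : 'I_n.+1, connect (adj T) x y) /\
  (forall c : seq 'I_n.+1, uniq c -> (3 <= size c)%N -> ~~ path.cycle (adj T) c).

Definition Gminus n (T : {set edge n}) : {set edge n} :=
  [set e | is_Gedge e & e \notin T].

(* t(0) := 0, t(k+1) := t k *)
Definition text (R : comRingType) n (t : 'I_n -> R) (i : 'I_n.+1) : R :=
  match unlift ord0 i with Some k => t k | None => 0 end.

Definition pY (R : comRingType) n (t : 'I_n -> R) (Y : {set edge n}) : R :=
  \prod_(e in Y) (text t e.2 - text t e.1).

(* S_n is represented by the permutations s of {0..n} with s 0 = 0. *)
Definition is_Sn n (s : {perm 'I_n.+1}) : bool := s ord0 == ord0.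

Definition Tpath n (s : {perm 'I_n.+1}) : {set edge n} :=
  [set edge_of (s (widen_ord (leqnSn n) k)) (s (lift ord0 k)) | k : 'I_n].

Definition Ps (R : comRingType) n (t : 'I_n -> R) (s : {perm 'I_n.+1}) : R :=
  \prod_(i : 'I_n.+1) \prod_(j : 'I_n.+1 | (i < j)%N && (j != i.+1 :> nat))
     (text t (s j) - text t (s i)).

Definition mm n (Y : {set edge n}) (s : {perm 'I_n.+1}) : nat :=
  #|[set e in Y | ((s^-1)%g e.2 < (s^-1)%g e.1)%N]|.

Definition precT n (T : {set edge n}) (i j : 'I_n.+1) : Prop :=
  i != j /\ exists p : seq 'I_n.+1,
    [/\ path (adj T) ord0 p, last ord0 p = j, uniq (ord0 :: p) & i \in ord0 :: p].

(* compatibility: some total order on {0..n} (given by an injective ranking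
   into nat) extends both <_T and <_T' *)
Definition compatible n (T T' : {set edge n}) : Prop :=
  exists r : 'I_n.+1 -> nat, injective r /\
    forall i j, (precT T i j \/ precT T' i j) -> (r i < r j)%N.

Definition Ccoef (R : comRingType) n (T T' : {set edge n}) : R :=
  if excluded_middle_informative (compatible T T') then 1 else 0.

From HB Require Import structures.
From mathcomp Require Import all_boot all_order all_algebra fingroup perm.
From mathcomp Require Import ring zify.
From Stdlib Require Import ClassicalEpsilon.
Import GRing.Theory.
Set Implicit Arguments. Unset Strict Implicit. Unset Printing Implicit Defensive.

(* A spanning tree rooted at 0 is the edge set of a parent function, and T is
   compatible with the path tree T_s exactly when s is a linear extension of the
   tree order.  So it suffices to show, for every rooted tree given by a parent
   function, that p_{G\T} is the sum of (-1)^mm P_s over its linear extensions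
   s.  This goes by induction on the number of linear extensions.  For a path
   tree T_s, s is the only extension and the identity is the reindexing
   p_{G\T_s} = (-1)^mm P_s.  Otherwise there are siblings a, b with parent p.
   Hanging b below a, resp. a below b, gives two trees whose extensions split
   those of T according to the order of a and b.  Writing G\T = X + {ab}, their
   complements are X + {pb} and X + {pa}, and the step is the three-term
   relation t(b) - t(a) = (t(b) - t(p)) - (t(a) - t(p)). *)

Section Edges.
Variable n : nat.
Local Notation V := 'I_n.+1.

Lemma edge_ofC (u w : V) : edge_of u w = edge_of w u.
Proof.
rewrite /edge_of; case: (ltngtP u w) => // uw.
by have -> : u = w by apply/val_inj.
Qed.

Lemma edge_of_inj (u w u' w' : V) : edge_of u w = edge_of u' w' ->
  (u = u' /\ w = w') \/ (u = w' /\ w = u').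
Proof. by rewrite /edge_of; do 2 case: ltnP => _; case=> -> ->; auto. Qed.

Lemma is_Gedge_edge_of (u w : V) : is_Gedge (edge_of u w) = (u != w).
Proof.
rewrite /is_Gedge /edge_of -val_eqE; by case: (ltngtP u w) => uw //=; rewrite uw ltnn.
Qed.

Lemma edge_of_Gedge (e : edge n) : is_Gedge e -> edge_of e.1 e.2 = e.
Proof. by case: e => u w; rewrite /is_Gedge /edge_of /= => ->. Qed.

Lemma adjC (E : {set edge n}) : symmetric (adj E).
Proof. by move=> x y; rewrite /adj orbC. Qed.

Lemma adj_of_edge_of (E : {set edge n}) (u w : V) :
  edge_of u w \in E -> adj E u w.
Proof. by rewrite /adj /edge_of; case: ltnP => _ ->; rewrite ?orbT. Qed.

Lemma adj_edge_of (E : {set edge n}) (u w : V) : (forall e, e \in E -> is_Gedge e) ->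
  adj E u w = (edge_of u w \in E).
Proof.
move=> EG; rewrite /adj /edge_of; case: (ltngtP u w) => uw.
- by case: (boolP ((w, u) \in E)) => [/EG|]; rewrite ?orbF // /is_Gedge /= ltnNge ltnW.
- by case: (boolP ((u, w) \in E)) => [/EG|]; rewrite ?orbF // /is_Gedge /= ltnNge ltnW.
- have -> : u = w by apply/val_inj.
  by rewrite orbb.
Qed.

Lemma eq_Gedge_sets (E F : {set edge n}) : (forall e, e \in E -> is_Gedge e) ->
  (forall e, e \in F -> is_Gedge e) -> adj E =2 adj F -> E = F.
Proof.
move=> EG FG EF; apply/setP => e.
case Ge: (is_Gedge e); last first.
  by apply/idP/idP => [/EG|/FG]; rewrite Ge.
by rewrite -(edge_of_Gedge Ge) -!adj_edge_of.
Qed.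

End Edges.

Section ParentFunctions.
Variable n : nat.
Local Notation V := 'I_n.+1.
Implicit Types (s : {perm V}) (v : V) (par : V -> V).

Definition pos s v : nat := (s^-1)%g v.

Lemma pos_inj s : injective (pos s).
Proof. by move=> u v /val_inj /perm_inj. Qed.

Lemma pos_lt s v : pos s v < n.+1.
Proof. exact: ltn_ord. Qed.

Lemma posK s (i : V) : pos s (s i) = i.
Proof. by rewrite /pos permK. Qed.

Lemma pos_inord s k : k < n.+1 -> pos s (s (inord k)) = k.
Proof. by move=> lt_k; rewrite posK inordK. Qed.

Lemma inord_pos s v : s (inord (pos s v)) = v.
Proof. by rewrite inord_val /pos permKV. Qed.

Lemma pos_eq0 s v : is_Sn s -> (pos s v == 0) = (v == ord0).
Proof.
move=> /eqP s0; apply/eqP/eqP => [|->]; last by rewrite -{1}s0 posK.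
by move=> pv0; apply: (@pos_inj s); rewrite pv0 -{1}s0 posK.
Qed.

Lemma pos_gt0 s v : is_Sn s -> (0 < pos s v) = (v != ord0).
Proof. by move=> s0; rewrite lt0n pos_eq0. Qed.

Definition rank_for par (rk : V -> nat) : Prop :=
  forall v, v != ord0 -> rk (par v) < rk v.

Definition is_linext par s : bool :=
  is_Sn s && [forall v : V, (v != ord0) ==> (pos s (par v) < pos s v)].

Lemma is_linextP par s :
  reflect (is_Sn s /\ rank_for par (pos s)) (is_linext par s).
Proof.
apply: (iffP andP) => -[s0 H]; split=> //.
  by move=> v; apply/implyP; move/forallP: H.
by apply/forallP => v; apply/implyP/H.
Qed.

Definition par_edges par : {set edge n} :=
  [set edge_of (par v) v | v in [pred v : V | v != ord0]].

Lemma mem_par_edges par (e : edge n) :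
  reflect (exists2 v, v != ord0 & e = edge_of (par v) v) (e \in par_edges par).
Proof. by apply: (iffP imsetP) => -[v vn0 ->]; exists v. Qed.

Lemma eq_par_edges par par' :
  (forall v, v != ord0 -> par v = par' v) -> par_edges par = par_edges par'.
Proof. by move=> eq_par; apply: eq_in_imset => v /eq_par ->. Qed.

Lemma eq_is_linext par par' :
  (forall v, v != ord0 -> par v = par' v) -> is_linext par =1 is_linext par'.
Proof.
move=> eq_par s; rewrite /is_linext; congr (_ && _); apply: eq_forallb => v.
by case: eqP => //= /eqP /eq_par ->.
Qed.

Lemma adj_par_edges par (x y : V) :
  adj (par_edges par) x y =
  ((y != ord0) && (x == par y)) || ((x != ord0) && (y == par x)).
Proof.
apply/idP/idP.
  by case/orP => /mem_par_edges [v vn0]; rewrite /edge_of;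
    case: ltnP => _ [-> ->]; rewrite vn0 eqxx ?orbT.
case/orP => /andP [vn0 /eqP ->]; last rewrite adjC.
  all: apply/adj_of_edge_of/mem_par_edges; by [exists y | exists x].
Qed.
End ParentFunctions.

Section Ranks.
Variable n : nat.
Local Notation V := 'I_n.+1.
Implicit Types (par : V -> V) (rk : V -> nat) (s : {perm V}).

Lemma rank_root_lt par rk v : rank_for par rk -> v != ord0 -> rk ord0 < rk v.
Proof.
move=> rkP; have [m] := ubnP (rk v); elim: m v => // m IH v /ltnSE le_rk vn0.
have lt_par := rkP v vn0; case: (eqVneq (par v) ord0) => [<- //| pn0].
exact: ltn_trans (IH _ (leq_trans lt_par le_rk) pn0) lt_par.
Qed.

Lemma exists_Sn_ordering (key : V -> nat) : injective key ->
  (forall v, key ord0 <= key v) ->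
  exists s : {perm V}, is_Sn s /\ forall u v, (pos s u < pos s v) = (key u < key v).
Proof.
move=> key_inj key0.
pose below v := #|[set u | key u < key v]|.
have below_lt v : below v < n.+1.
  rewrite -[n.+1]card_ord -cardsT; apply/proper_card/properP; split.
    exact: subsetT.
  by exists v; rewrite ?inE // ltnn.
have belowE u v : (below u < below v) = (key u < key v).
  apply/idP/idP => [|lt_uv]; last first.
    apply/proper_card/properP; split; last by exists u; rewrite !inE ?ltnn.
    by apply/subsetP => z; rewrite !inE => /ltn_trans; apply.
  apply: contraLR; rewrite -!leqNgt => le_vu; apply/subset_leq_card/subsetP => z.
  by rewrite !inE => /leq_trans; apply.
pose f v := Ordinal (below_lt v).
have f_inj : injective f.
  move=> u v /(congr1 val) /= e_uv; apply: key_inj.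
  by case: (ltngtP (key u) (key v)) => //; rewrite -belowE e_uv ltnn.
exists (perm f_inj)^-1%g; have posE v : pos (perm f_inj)^-1%g v = below v.
  by rewrite /pos invgK permE.
split => [|u v]; last by rewrite !posE belowE.
apply/eqP/(canLR (permK _))/val_inj; rewrite permE /= /below.
by apply/esym/eqP; rewrite cards_eq0; apply/eqP/setP => u; rewrite !inE ltnNge key0.
Qed.

Lemma linext_of_rank par rk : rank_for par rk -> exists s, is_linext par s.
Proof.
move=> rkP; pose key v := rk v * n.+1 + v.
have key_inj : injective key.
  move=> u v /(congr1 (modn^~ n.+1)); rewrite !modnMDl !modn_small //.
  exact: val_inj.
have key0 v : key ord0 <= key v.
  case: (eqVneq v ord0) => [-> //| vn0]; rewrite /key /= addn0.
  apply: leq_trans (leq_addr _ _).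
  by rewrite leq_mul2r (ltnW (rank_root_lt rkP vn0)) orbT.
have [s [s0 posE]] := exists_Sn_ordering key_inj key0.
exists s; apply/is_linextP; split=> // v vn0; rewrite posE /key.
apply: (leq_trans (n := (rk (par v)).+1 * n.+1)).
  by rewrite mulSn [n.+1 + _]addnC ltn_add2l.
by apply: leq_trans (leq_addr _ _); rewrite leq_mul2r (rkP v vn0) orbT.
Qed.
End Ranks.

Section Reparent.
Variable n : nat.
Local Notation V := 'I_n.+1.
Implicit Types (par : V -> V) (rk : V -> nat) (s : {perm V}).

Lemma par_edges_Gedge par rk : rank_for par rk ->
  forall e, e \in par_edges par -> is_Gedge e.
Proof.
move=> rkP e /mem_par_edges [v vn0 ->]; rewrite is_Gedge_edge_of.
by apply: contraTneq (rkP v vn0) => ->; rewrite ltnn.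
Qed.

Lemma par_edge_inj par rk v w : rank_for par rk -> v != ord0 -> w != ord0 ->
  edge_of (par v) v = edge_of (par w) w -> v = w.
Proof.
move=> rkP vn0 wn0 /edge_of_inj [[_ //]|[pv pw]].
by move: (rkP v vn0) (rkP w wn0); rewrite pv -pw; lia.
Qed.

Definition reparent par (b a : V) : V -> V := fun v => if v == b then a else par v.

Lemma par_edges_reparent par rk (a b : V) : rank_for par rk -> b != ord0 ->
  par_edges (reparent par b a) = edge_of a b |: (par_edges par :\ edge_of (par b) b).
Proof.
move=> rkP bn0; apply/setP => e; rewrite !inE; apply/mem_par_edges/idP.
  move=> [v vn0 ->]; rewrite /reparent; case: (eqVneq v b) => [-> | vb].
    by rewrite eqxx.
  apply/orP; right; apply/andP; split; last by apply/mem_par_edges; exists v.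
  by apply: contra_neq vb; apply: par_edge_inj rkP vn0 bn0.
case/orP => [/eqP -> | /andP [ne /mem_par_edges [v vn0 ev]]].
  by exists b; rewrite /reparent ?eqxx.
exists v; rewrite // /reparent; case: eqVneq => // vb.
by rewrite ev vb eqxx in ne.
Qed.

Variables (par : V -> V) (a b : V).
Hypotheses (an0 : a != ord0) (bn0 : b != ord0) (ab : a != b) (sib : par a = par b).

Lemma is_linext_reparent s :
  is_linext (reparent par b a) s = is_linext par s && (pos s a < pos s b).
Proof.
apply/is_linextP/andP => -[s0 H].
  have pab := H b bn0; rewrite /reparent eqxx in pab.
  split=> //; apply/is_linextP; split=> // v vn0.
  case: (eqVneq v b) => [-> | vb]; last by have := H v vn0; rewrite /reparent (negbTE vb).
  by rewrite -sib; have := H a an0; rewrite /reparent (negbTE ab) => /ltn_trans->.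
case/is_linextP: s0 => s0 rkP; split=> // v vn0.
by rewrite /reparent; case: eqVneq => [-> //|_]; apply: rkP.
Qed.

Lemma exists_linext_reparent s0 : is_linext par s0 ->
  exists s, is_linext (reparent par b a) s.
Proof.
case/is_linextP => _ rkP; pose p := par a.
have lt_pa : pos s0 p < pos s0 a := rkP a an0.
have lt_pb : pos s0 p < pos s0 b by rewrite /p sib; apply: rkP.
(* Rank by doubled positions in s0, with a slotted in right after its parent. *)
apply: (@linext_of_rank _ _ (fun v => if v == a then (pos s0 p).*2.+1 else (pos s0 v).*2)).
move=> v vn0; rewrite /reparent.
case: (eqVneq v b) => [-> | vb]; first by rewrite eqxx eq_sym (negbTE ab); lia.
case: (eqVneq v a) => [-> | va].
  have -> : (par a == a) = false by apply/eqP => pa; move: lt_pa; rewrite /p pa ltnn.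
  by rewrite -/p; lia.
have lt_v := rkP v vn0; case: (eqVneq (par v) a) => [pva | _]; last by lia.
by move: lt_v; rewrite pva; lia.
Qed.

End Reparent.

Section Exchange.
Variable n : nat.
Local Notation V := 'I_n.+1.
Variables (par : V -> V) (a b : V).
Hypotheses (an0 : a != ord0) (bn0 : b != ord0) (ab : a != b) (sib : par a = par b).

Lemma sum_linext_reparent (M : nmodType) (F : {perm V} -> M) :
  (\sum_(s | is_linext par s) F s =
   \sum_(s | is_linext (reparent par b a) s) F s +
   \sum_(s | is_linext (reparent par a b) s) F s)%R.
Proof.
rewrite (bigID (fun s => pos s a < pos s b)) /=; congr (_ + _)%R.
  by apply: eq_bigl => s; rewrite is_linext_reparent.
have ba : b != a by rewrite eq_sym.
apply: eq_bigl => s; rewrite (is_linext_reparent bn0 an0 ba (esym sib)).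
suff -> : ~~ (pos s a < pos s b) = (pos s b < pos s a) by [].
by rewrite ltnNge negbK leq_eqVlt (inj_eq (@pos_inj _ s)) eq_sym (negbTE ab).
Qed.

Lemma card_linext_reparent s0 : is_linext par s0 ->
  #|[set s | is_linext (reparent par b a) s]| < #|[set s | is_linext par s]|.
Proof.
move=> s0P; have ba : b != a by rewrite eq_sym.
have [s] := exists_linext_reparent bn0 an0 ba (esym sib) s0P.
rewrite (is_linext_reparent bn0 an0 ba (esym sib)) => /andP [sP /ltnW].
rewrite leqNgt => ba_s; apply/proper_card/properP; split.
  by apply/subsetP => s'; rewrite !inE is_linext_reparent // => /andP[].
by exists s; rewrite !inE ?is_linext_reparent // sP (negbTE ba_s).
Qed.

End Exchange.

Lemma increasing_bounded_id m (f : nat -> nat) : (forall k, k < m -> f k < f k.+1) ->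
  (forall k, k <= m -> f k <= m) -> forall k, k <= m -> f k = k.
Proof.
move=> f_incr f_le.
have ge_id k : k <= m -> k <= f k.
  by elim: k => // k IH lt_km; apply: leq_ltn_trans (IH (ltnW lt_km)) (f_incr k lt_km).
have le_id j : j <= m -> f (m - j) <= m - j.
  elim: j => [|j IH] le_jm; first by rewrite subn0 f_le.
  have e : (m - j.+1).+1 = m - j by lia.
  by have := f_incr (m - j.+1) ltac:(lia); rewrite e; have := IH (ltnW le_jm); lia.
move=> k le_km; have := ge_id k le_km.
by have := le_id (m - k) (leq_subr _ _); rewrite subKn //; lia.
Qed.

Section PathTrees.
Variable n : nat.
Local Notation V := 'I_n.+1.
Implicit Types (s : {perm V}).

Lemma mem_TpathP s e :
  reflect (exists2 k, k < n & e = edge_of (s (inord k)) (s (inord k.+1))) (e \in Tpath s).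
Proof.
apply: (iffP imsetP) => -[k]; last first.
  move=> lt_kn ->; exists (Ordinal lt_kn) => //.
  by congr (edge_of (s _) (s _)); apply/val_inj; rewrite ?lift0 /= inordK //; lia.
move=> _ ->; exists k => //; have lt_kn := ltn_ord k.
by congr (edge_of (s _) (s _)); apply/val_inj; rewrite ?lift0 /= inordK //; lia.
Qed.

Lemma mem_Tpath s (u w : V) : pos s u < pos s w ->
  (edge_of u w \in Tpath s) = (pos s w == (pos s u).+1).
Proof.
move=> lt_uw; apply/mem_TpathP/eqP => [[k lt_kn] | pw].
  have [lt_k lt_k1] : k < n.+1 /\ k.+1 < n.+1 by split; lia.
  by move: lt_uw => /[swap] /edge_of_inj [] [-> ->]; rewrite !pos_inord //; lia.
exists (pos s u); first by have := pos_lt s w; rewrite pw.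
by rewrite -pw !inord_pos.
Qed.

Definition chain_of s : V -> V := fun v => s (inord (pos s v).-1).

Lemma chain_of_succ s k : k < n -> chain_of s (s (inord k.+1)) = s (inord k).
Proof. by move=> lt_kn; rewrite /chain_of pos_inord. Qed.

Lemma rank_chain_of s : is_Sn s -> rank_for (chain_of s) (pos s).
Proof.
move=> s0 v vn0; have := pos_gt0 v s0; rewrite vn0 /chain_of pos_inord; first lia.
by have := pos_lt s v; lia.
Qed.

Lemma par_edges_chain_of s : is_Sn s -> par_edges (chain_of s) = Tpath s.
Proof.
move=> s0; apply/setP => e; apply/mem_par_edges/mem_TpathP => -[v].
  move=> vn0 ->; exists (pos s v).-1.
    by have := pos_lt s v; have := pos_gt0 v s0; rewrite vn0; lia.
  by rewrite prednK ?inord_pos // pos_gt0.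
move=> lt_vn ->; exists (s (inord v.+1)); last by rewrite chain_of_succ.
by rewrite -(pos_gt0 _ s0) pos_inord.
Qed.

Lemma rank_chain_of_mono s rk : is_Sn s -> rank_for (chain_of s) rk ->
  forall u w, pos s u < pos s w -> rk u < rk w.
Proof.
move=> s0 rkP.
have : {in gtn n.+1 &, {homo (fun k => rk (s (inord k))) : i j / i < j >-> i < j}}.
  apply: homo_ltn_in => [j i k | i j _ | k _]; first exact: ltn_trans.
    by rewrite !inE => lt_jn k /andP [_ /ltn_trans]; apply.
  rewrite !inE ltnS => lt_kn; rewrite -(chain_of_succ s lt_kn).
  by apply: rkP; rewrite -(pos_gt0 _ s0) pos_inord.
move=> mono u w lt_uw; rewrite -[u](inord_pos s) -[w](inord_pos s).
by apply: (mono _ _ _ _ lt_uw); rewrite inE ltn_ord.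
Qed.

Lemma is_linext_chain_of s0 s : is_Sn s0 -> is_linext (chain_of s0) s = (s == s0).
Proof.
move=> s00; apply/idP/eqP => [| ->]; last first.
  by apply/is_linextP; split; last exact: rank_chain_of.
case/is_linextP => _ /(rank_chain_of_mono s00) mono.
have id_pos := @increasing_bounded_id n (fun k => pos s (s0 (inord k))).
apply/permP => i; rewrite -[s0 i](inord_pos s); congr (s _); apply/val_inj.
rewrite /= inordK ?pos_lt //; have -> : s0 i = s0 (inord i) by rewrite inord_val.
rewrite id_pos // => [k lt_kn | k _ |]; last by rewrite -ltnS.
  by apply: mono; rewrite !pos_inord // ltnS ltnW.
by rewrite -ltnS pos_lt.
Qed.

End PathTrees.

Section SignedProducts.
Variables (n : nat) (R : comRingType) (t : 'I_n -> R).
Local Notation V := 'I_n.+1.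
Local Open Scope ring_scope.
Implicit Types (s : {perm V}) (u w : V) (e : edge n).

Definition orient_sign u w : R := (-1) ^+ (w < u)%N.
Definition edge_sign s e : R := (-1) ^+ (pos s e.2 < pos s e.1)%N.
Definition edge_diff e : R := text t e.2 - text t e.1.

Lemma signed_mm (Y : {set edge n}) s : (-1) ^+ mm Y s = \prod_(e in Y) edge_sign s e.
Proof.
rewrite /edge_sign (bigID (fun e => pos s e.2 < pos s e.1)%N) /=.
rewrite [X in _ * X]big1 ?mulr1 => [|e /andP [_ /negbTE ->] //].
rewrite (eq_bigr (fun _ => -1)) => [|e /andP [_ ->] //].
by rewrite prodr_const; congr (_ ^+ _); apply: eq_card => e; rewrite !inE.
Qed.

Lemma orient_signC u w : u != w -> orient_sign w u = - orient_sign u w.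
Proof.
move=> uw; rewrite /orient_sign -signrN; congr (_ ^+ _).
by case: (ltngtP u w) => // /val_inj eq_uw; rewrite eq_uw eqxx in uw.
Qed.

Lemma edge_sign_edge_of s u w : (pos s u < pos s w)%N ->
  edge_sign s (edge_of u w) = orient_sign u w.
Proof.
move=> lt_uw; rewrite /edge_sign /orient_sign /edge_of; case: (ltngtP u w) => /= uw.
- by rewrite ltnNge (ltnW lt_uw).
- by rewrite lt_uw.
- have eq_uw : u = w by apply/val_inj.
  by rewrite eq_uw ltnn in lt_uw.
Qed.

Lemma edge_diff_edge_of u w :
  edge_diff (edge_of u w) = orient_sign u w * (text t w - text t u).
Proof.
rewrite /edge_diff /orient_sign /edge_of; case: (ltngtP u w) => /= uw.
- by rewrite mul1r.
- by rewrite mulN1r opprB.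
- by rewrite mul1r; have -> : u = w by apply/val_inj.
Qed.

Lemma Gminus_Tpath s : Gminus (Tpath s) =
  [set edge_of q.1 q.2 | q in [pred q : V * V |
     (pos s q.1 < pos s q.2)%N && (pos s q.2 != (pos s q.1).+1)]].
Proof.
apply/setP => e; rewrite inE; apply/andP/imsetP => [[Ge nT] | [q /andP [lt nc] ->]].
  pose q := if (pos s e.1 < pos s e.2)%N then e else (e.2, e.1).
  have eq : edge_of q.1 q.2 = e.
    by rewrite /q; case: ifP => _ /=; rewrite ?[edge_of e.2 e.1]edge_ofC edge_of_Gedge.
  have lt_q : (pos s q.1 < pos s q.2)%N.
    rewrite /q; case: ifP => //= /negbT; rewrite -leqNgt leq_eqVlt orbC => /orP [] //.
    by move/eqP/pos_inj => e21; move: Ge; rewrite /is_Gedge e21 ltnn.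
  by exists q; rewrite // inE lt_q -(mem_Tpath lt_q) eq.
rewrite is_Gedge_edge_of (mem_Tpath lt) nc; split=> //.
by apply: contraTneq lt => ->; rewrite ltnn.
Qed.

Lemma prod_Gminus_Tpath s :
  \prod_(e in Gminus (Tpath s)) (edge_sign s e * edge_diff e) = Ps t s.
Proof.
rewrite Gminus_Tpath big_imset /=; last first.
  move=> [u w] [u' w'] /andP [lt _] /andP [lt' _] /= /edge_of_inj [[-> ->] // | [eu ew]].
  by move: lt lt'; rewrite -eu -ew /=; lia.
rewrite (eq_bigr (fun q => text t q.2 - text t q.1)) => [|[u w] /andP [lt _]]; last first.
  by rewrite edge_sign_edge_of // edge_diff_edge_of /orient_sign signrMK.
rewrite /Ps pair_big_dep /= (reindex (fun q : V * V => (s q.1, s q.2))) /=.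
  by apply: eq_bigl => -[i j]; rewrite inE /= !posK.
by exists (fun q : V * V => ((s^-1)%g q.1, (s^-1)%g q.2)) => -[u w] _ /=;
  rewrite ?permK ?permKV.
Qed.

Lemma pY_Tpath s : pY t (Gminus (Tpath s)) = (-1) ^+ mm (Gminus (Tpath s)) s * Ps t s.
Proof.
rewrite signed_mm -prod_Gminus_Tpath -big_split /=.
by apply: eq_bigr => e _; rewrite /edge_sign signrMK.
Qed.

Definition tree_expansion (par : V -> V) : Prop :=
  pY t (Gminus (par_edges par)) =
  \sum_(s | is_linext par s) (-1) ^+ mm (Gminus (par_edges par)) s * Ps t s.

End SignedProducts.

Lemma Gminus_exchange n (E : {set edge n}) (e1 e2 : edge n) : is_Gedge e2 -> e1 != e2 ->
  Gminus (e1 |: (E :\ e2)) = e2 |: (Gminus E :\ e1).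
Proof.
move=> G2 ne; apply/setP => e; rewrite !inE.
case: (eqVneq e e2) => [-> | ne2]; first by rewrite G2 eq_sym (negbTE ne).
by case: (eqVneq e e1) => [-> | ne1]; rewrite ?andbF //= negb_and negbK.
Qed.

Section ExchangeProducts.
Variables (n : nat) (R : comRingType) (t : 'I_n -> R).
Local Notation V := 'I_n.+1.
Variables (par : V -> V) (a b : V) (s0 : {perm V}).
Hypotheses (s0P : is_linext par s0) (an0 : a != ord0) (bn0 : b != ord0) (ab : a != b)
  (sib : par a = par b).
Local Notation X := (Gminus (par_edges par) :\ edge_of a b).
Local Open Scope ring_scope.

Let rkP : rank_for par (pos s0). Proof. by case/is_linextP: s0P. Qed.

Let pb_b : par b != b.
Proof. by apply/eqP => pbb; move: (rkP bn0); rewrite pbb ltnn. Qed.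

Let pb_a : par b != a.
Proof. by apply/eqP => pba; move: (rkP an0); rewrite sib pba ltnn. Qed.

Let ab_pb : edge_of a b != edge_of (par b) b.
Proof.
apply/eqP => /edge_of_inj [[ea _] | [eab _]]; first by move: pb_a; rewrite ea eqxx.
by move: ab; rewrite eab eqxx.
Qed.

Let ab_Gminus : edge_of a b \in Gminus (par_edges par).
Proof.
have : edge_of a b \notin par_edges par.
  apply/negP => /(mem_par_edges par) [v vn0 /edge_of_inj [[ea eb] | [ea eb]]].
    by move: pb_a; rewrite eb -ea eqxx.
  by move: pb_b; rewrite -sib ea -eb eqxx.
by rewrite inE is_Gedge_edge_of ab => ->.
Qed.

Lemma prod_Gminus_par_edges (F : edge n -> R) :
  \prod_(e in Gminus (par_edges par)) F e = F (edge_of a b) * \prod_(e in X) F e.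
Proof. by rewrite (big_setD1 _ ab_Gminus). Qed.

Lemma prod_Gminus_reparent (F : edge n -> R) :
  \prod_(e in Gminus (par_edges (reparent par b a))) F e =
  F (edge_of (par b) b) * \prod_(e in X) F e.
Proof.
have Gpb : is_Gedge (edge_of (par b) b) by rewrite is_Gedge_edge_of.
rewrite (par_edges_reparent _ rkP) // (Gminus_exchange _ Gpb ab_pb).
have pb_in : edge_of (par b) b \in par_edges par by apply/mem_par_edges; exists b.
by rewrite big_setU1 // !inE pb_in !andbF.
Qed.

Lemma sign_mm_reparent s : is_linext (reparent par b a) s ->
  (-1) ^+ mm (Gminus (par_edges par)) s =
  orient_sign R a b * orient_sign R (par b) b *
  (-1) ^+ mm (Gminus (par_edges (reparent par b a))) s.
Proof.
rewrite is_linext_reparent // => /andP [/is_linextP [_ rk_s] lt_ab].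
rewrite !signed_mm prod_Gminus_par_edges prod_Gminus_reparent.
rewrite !edge_sign_edge_of ?rk_s // /orient_sign -!mulrA; congr (_ * _).
by rewrite signrMK.
Qed.

Lemma sum_linext_reparent_pY : tree_expansion t (reparent par b a) ->
  \sum_(s | is_linext (reparent par b a) s) (-1) ^+ mm (Gminus (par_edges par)) s * Ps t s =
  orient_sign R a b * (text t b - text t (par b)) * \prod_(e in X) edge_diff t e.
Proof.
move=> IH; rewrite (eq_bigr (fun s => orient_sign R a b * orient_sign R (par b) b *
  ((-1) ^+ mm (Gminus (par_edges (reparent par b a))) s * Ps t s))); last first.
  by move=> s /sign_mm_reparent ->; rewrite mulrA.
rewrite -mulr_sumr -IH [pY _ _](prod_Gminus_reparent (edge_diff t)) edge_diff_edge_of.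
by rewrite /orient_sign -!mulrA signrMK.
Qed.

End ExchangeProducts.

Section MainIdentity.
Variables (n : nat) (R : comRingType) (t : 'I_n -> R).
Local Notation V := 'I_n.+1.
Implicit Types (par : V -> V) (s : {perm V}).

Lemma chain_or_siblings par s0 : is_linext par s0 ->
  (forall v, v != ord0 -> par v = chain_of s0 v) \/
  exists a b : V, [/\ a != ord0, b != ord0, a != b & par a = par b].
Proof.
case/is_linextP => s00 rkP.
pose off_chain v := (v != ord0) && (par v != chain_of s0 v).
case: (pickP off_chain) => [b0 b0P | on_chain]; last first.
  by left => v vn0; apply/eqP; have := on_chain v; rewrite /off_chain vn0 => /negbFE.
right; case: (@arg_minnP _ b0 off_chain (pos s0) b0P) => b /andP [bn0 nb] bmin.
have lt_pb := rkP b bn0; set p := par b in nb lt_pb.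
have ne_pb : pos s0 p != (pos s0 b).-1.
  by apply: contra_neq nb => e; rewrite /chain_of -e inord_pos.
pose a := s0 (inord (pos s0 p).+1).
have pa : pos s0 a = (pos s0 p).+1.
  by rewrite pos_inord //; have := pos_lt s0 b; move: lt_pb; clear; lia.
have lt_ab : pos s0 a < pos s0 b by rewrite pa; move: lt_pb ne_pb; clear; lia.
have an0 : a != ord0 by rewrite -(pos_gt0 _ s00) pa.
exists a, b; split=> //; first by apply: contraTneq lt_ab => ->; rewrite ltnn.
have : ~~ off_chain a by apply/negP => /bmin; rewrite leqNgt lt_ab.
by rewrite /off_chain an0 negbK => /eqP ->; rewrite /chain_of pa inord_pos.
Qed.

Lemma tree_expansion_exchange par s0 (a b : V) : is_linext par s0 ->
  a != ord0 -> b != ord0 -> a != b -> par a = par b ->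
  tree_expansion t (reparent par b a) -> tree_expansion t (reparent par a b) ->
  tree_expansion t par.
Proof.
move=> s0P an0 bn0 ab sib IHa IHb; have ba : b != a by rewrite eq_sym.
rewrite /tree_expansion (sum_linext_reparent an0 bn0 ab sib).
rewrite (sum_linext_reparent_pY s0P an0 bn0 ab sib IHa).
rewrite (sum_linext_reparent_pY s0P bn0 an0 ba (esym sib) IHb) (edge_ofC b a).
rewrite [pY _ _](prod_Gminus_par_edges s0P an0 bn0 ab sib (edge_diff t)).
by rewrite edge_diff_edge_of sib (orient_signC _ ab); ring.
Qed.

Lemma tree_expansion_chain s : is_Sn s -> tree_expansion t (chain_of s).
Proof.
move=> s0; rewrite /tree_expansion par_edges_chain_of // pY_Tpath.
by rewrite (big_pred1 s) // => s'; rewrite is_linext_chain_of.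
Qed.

Lemma linext_tree_expansion par s0 : is_linext par s0 -> tree_expansion t par.
Proof.
have [N] := ubnP #|[set s | is_linext par s]|.
elim: N par s0 => // N IH par s0 lt_card s0P.
case: (chain_or_siblings s0P) => [chain | [a [b [an0 bn0 ab sib]]]].
  rewrite /tree_expansion (eq_par_edges chain) (eq_bigl _ _ (eq_is_linext chain)).
  by apply: tree_expansion_chain; case/andP: s0P.
have ba : b != a by rewrite eq_sym.
have [sa saP] := exists_linext_reparent an0 bn0 ab sib s0P.
have [sb sbP] := exists_linext_reparent bn0 an0 ba (esym sib) s0P.
apply: (tree_expansion_exchange s0P an0 bn0 ab sib).
  exact: IH _ _ (leq_trans (card_linext_reparent an0 bn0 ab sib s0P) lt_card) saP.
exact: IH _ _ (leq_trans (card_linext_reparent bn0 an0 ba (esym sib) s0P) lt_card) sbP.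
Qed.

End MainIdentity.

Lemma path_ltn_last (T : eqType) (rk : T -> nat) (x : T) p :
  path (fun u w => rk u < rk w) x p ->
  forall i, i \in x :: p -> i != last x p -> rk i < rk (last x p).
Proof.
elim: p x => [|y p IH] x /=; first by move=> _ i; rewrite inE => /eqP ->; rewrite eqxx.
case/andP => lt_xy yp i; rewrite inE => /orP [/eqP -> _ | ip]; last exact: IH.
case: (eqVneq y (last y p)) => [<- // | ne].
exact: ltn_trans lt_xy (IH y yp y (mem_head _ _) ne).
Qed.

Section Precedence.
Variable n : nat.
Local Notation V := 'I_n.+1.
Implicit Types (par : V -> V) (rk : V -> nat).

Lemma root_path par rk : rank_for par rk -> forall v : V, exists p,
  [/\ path (adj (par_edges par)) ord0 p, last ord0 p = v, uniq (ord0 :: p),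
      {in ord0 :: p, forall x, rk x <= rk v} & v != ord0 -> par v \in ord0 :: p].
Proof.
move=> rkP v; have [m] := ubnP (rk v); elim: m v => // m IH v /ltnSE le_rk.
case: (eqVneq v ord0) => [-> | vn0].
  by exists [::]; split=> // x; rewrite inE => /eqP ->.
have lt_v := rkP v vn0.
have [p [pP lastp up boundp _]] := IH (par v) (leq_trans lt_v le_rk).
exists (rcons p v); rewrite -rcons_cons; split.
- by rewrite rcons_path pP lastp /= (adj_par_edges par) vn0 eqxx.
- by rewrite last_rcons.
- by rewrite rcons_uniq up andbT; apply/negP => /boundp; rewrite leqNgt lt_v.
- move=> x; rewrite mem_rcons inE => /orP [/eqP -> // | /boundp le_x].
  exact: leq_trans le_x (ltnW lt_v).
- by move=> _; rewrite mem_rcons inE -lastp mem_last orbT.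
Qed.

Lemma precT_parent par rk (v : V) : rank_for par rk -> v != ord0 ->
  precT (par_edges par) (par v) v.
Proof.
move=> rkP vn0; split; first by apply/eqP => pv; move: (rkP v vn0); rewrite pv ltnn.
by have [p [pP lastp up _ /(_ vn0) pvp]] := root_path rkP v; exists p.
Qed.

Lemma root_path_increasing par rk : rank_for par rk ->
  forall (z : V) p, path (adj (par_edges par)) z p -> uniq (z :: p) ->
  (z != ord0 -> par z \notin p) -> path (fun x y => rk x < rk y) z p.
Proof.
move=> rkP z p; elim: p z => [// | y p IH] z /= /andP [zy yp] /andP [zNyp uyp] hz.
move: zy; rewrite adj_par_edges => /orP [] /andP [nz /eqP zE].
  rewrite zE rkP //=; apply: IH => // _; apply: contra zNyp; rewrite zE inE => ->.
  by rewrite orbT.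
by move: (hz nz); rewrite -zE inE eqxx.
Qed.

Lemma precT_rank par rk (i j : V) : rank_for par rk ->
  precT (par_edges par) i j -> rk i < rk j.
Proof.
move=> rkP [ij [p [pP lastp up ip]]]; rewrite -lastp.
apply: path_ltn_last ip _; last by rewrite lastp.
by apply: root_path_increasing rkP _ _ pP up _; rewrite eqxx.
Qed.

Lemma compatible_par_edges par1 par2 rk1 rk2 : rank_for par1 rk1 -> rank_for par2 rk2 ->
  compatible (par_edges par1) (par_edges par2) <->
  exists r : V -> nat, [/\ injective r, rank_for par1 r & rank_for par2 r].
Proof.
move=> rk1P rk2P; split=> [[r [r_inj rP]] | [r [r_inj r1P r2P]]].
  exists r; split=> // v vn0; apply: rP; first by left; apply: precT_parent rk1P vn0.
  by right; apply: precT_parent rk2P vn0.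
by exists r; split=> // i j [] /precT_rank; apply.
Qed.

Lemma compatible_Tpath par rk (s : {perm V}) : rank_for par rk -> is_Sn s ->
  compatible (par_edges par) (Tpath s) <-> is_linext par s.
Proof.
move=> rkP s0; rewrite -par_edges_chain_of // (compatible_par_edges rkP (rank_chain_of s0)).
split=> [[r [_ rP rcP]] | /is_linextP [_ posP]]; last first.
  by exists (pos s); split=> //; [apply: pos_inj | apply: rank_chain_of].
apply/is_linextP; split=> // v vn0; rewrite ltnNge leq_eqVlt; apply/negP.
case/orP => [/eqP /pos_inj pv | /(rank_chain_of_mono s0 rcP) lt_r].
  by have := rP v vn0; rewrite -pv ltnn.
by have := rP v vn0; rewrite ltnNge (ltnW lt_r).
Qed.

End Precedence.

Lemma path_iota (e : rel nat) a m : (forall k, a <= k < a + m -> e k k.+1) ->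
  path e a (iota a.+1 m).
Proof.
elim: m a => [// | m IH] a step /=; rewrite step ?leqnn ?addnS ?ltnS ?leq_addr //=.
by apply: IH => k /andP [lt_ak lt_km]; apply: step; rewrite ltnW //=; lia.
Qed.

Lemma cycle_iota (e : rel nat) m : (forall k, k < m -> e k k.+1) -> e m 0 ->
  path.cycle e (iota 0 m.+1).
Proof.
move=> step close; rewrite (cycle_path 0).
have -> : last 0 (iota 0 m.+1) = m by rewrite -addn1 iotaD last_cat.
by rewrite /= close /=; apply: path_iota => k /andP [_]; apply: step.
Qed.

Section SpanningTrees.
Variables (n : nat) (T : {set edge n}).
Hypothesis treeT : is_spanning_tree T.
Local Notation V := 'I_n.+1.

Let T_Gedge : forall e, e \in T -> is_Gedge e. Proof. by case: treeT. Qed.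

Lemma adj_tree_neq (x y : V) : adj T x y -> x != y.
Proof. by rewrite adj_edge_of // => /T_Gedge; rewrite is_Gedge_edge_of. Qed.

Definition reach_in (k : nat) (v : V) : bool :=
  [exists p : k.-tuple V, path (adj T) ord0 p && (last ord0 p == v)].

Lemma reach_inP k v :
  reflect (exists p, [/\ size p = k, path (adj T) ord0 p & last ord0 p = v]) (reach_in k v).
Proof.
apply: (iffP existsP) => [[p /andP [pP /eqP lastp]] | [p [sz pP lastp]]].
  by exists p; rewrite size_tuple.
have sz' : size p == k by rewrite sz.
by exists (Tuple sz'); rewrite /= pP lastp eqxx.
Qed.

Lemma reachable v : exists k, reach_in k v.
Proof.
have [_ [conn _]] := treeT; case/connectP: (conn ord0 v) => p pP lastp.
by exists (size p); apply/reach_inP; exists p.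
Qed.

Definition dist v := ex_minn (reachable v).

Lemma dist_min v k : reach_in k v -> dist v <= k.
Proof. by rewrite /dist; case: ex_minnP => m _; apply. Qed.

Lemma dist_reach v : reach_in (dist v) v.
Proof. by rewrite /dist; case: ex_minnP. Qed.

Lemma dist_eq0 v : (dist v == 0) = (v == ord0).
Proof.
apply/eqP/eqP => [d0 | ->].
  by have := dist_reach v; rewrite d0 => /reach_inP [p [/size0nil -> _ <-]].
by apply/eqP; rewrite -leqn0 dist_min //; apply/reach_inP; exists [::].
Qed.

Lemma dist_adj u v : adj T u v -> dist v <= (dist u).+1.
Proof.
move=> uv; case/reach_inP: (dist_reach u) => p [sz pP lastp].
apply: dist_min; apply/reach_inP; exists (rcons p v).
by rewrite size_rcons sz rcons_path pP lastp last_rcons uv.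
Qed.

Lemma exists_closer_neighbour v : v != ord0 -> exists u, adj T u v && (dist u < dist v).
Proof.
rewrite -dist_eq0 => dv; case/reach_inP: (dist_reach v) => p [sz pP lastp].
case/lastP: p sz pP lastp => [/= d0 | p y]; first by rewrite -d0 in dv.
rewrite size_rcons last_rcons => sz.
rewrite rcons_path => /andP [pP uv] yv; exists (last ord0 p); rewrite -sz ltnS -yv uv /=.
by apply: dist_min; apply/reach_inP; exists p.
Qed.

Definition tpar (v : V) : V := odflt ord0 [pick u | adj T u v && (dist u < dist v)].

Lemma tpar_spec v : v != ord0 -> adj T (tpar v) v /\ dist v = (dist (tpar v)).+1.
Proof.
move=> vn0; rewrite /tpar; case: pickP => [u /andP [uv lt_uv] | none] /=; last first.
  by have [u] := exists_closer_neighbour vn0; rewrite none.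
by split=> //; apply/eqP; rewrite eqn_leq dist_adj.
Qed.

Lemma rank_tpar : rank_for tpar dist.
Proof. by move=> v /tpar_spec [_ ->]. Qed.

Lemma dist_iter_tpar v k : k <= dist v -> dist (iter k tpar v) = dist v - k.
Proof.
elim: k => [|k IH] lt_kd; first by rewrite subn0.
have dk := IH (ltnW lt_kd); have : iter k tpar v != ord0 by rewrite -dist_eq0 dk; lia.
by move/tpar_spec => [_]; rewrite iterS dk; lia.
Qed.

Lemma iter_tpar_adj v k : k < dist v -> adj T (iter k.+1 tpar v) (iter k tpar v).
Proof.
move=> lt_kd; have : iter k tpar v != ord0.
  by rewrite -dist_eq0 (dist_iter_tpar (ltnW lt_kd)); lia.
by case/tpar_spec.
Qed.

Lemma iter_tpar_inj v k1 k2 : k1 <= dist v -> k2 <= dist v ->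
  iter k1 tpar v = iter k2 tpar v -> k1 = k2.
Proof. by move=> le1 le2 /(congr1 dist); rewrite !dist_iter_tpar //; lia. Qed.

Lemma iter_tpar_root v : iter (dist v) tpar v = ord0.
Proof. by apply/eqP; rewrite -dist_eq0 dist_iter_tpar ?subnn. Qed.


(* If an edge xy of T is not a parent edge, climbing from x and from y to the
   first common ancestor and closing with xy gives a cycle of T; minimality of
   i + j makes it simple. *)
Section MeetingCycle.
Variables (x y : V) (i j : nat).
Hypotheses (xy : adj T x y) (not_pc : ~~ adj (par_edges tpar) x y).
Hypotheses (le_i : i <= dist x) (le_j : j <= dist y) (meet : iter i tpar x = iter j tpar y).
Hypothesis min_meet : forall i' j', i' <= dist x -> j' <= dist y ->
  iter i' tpar x = iter j' tpar y -> i + j <= i' + j'.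

Let walk k := if k <= i then iter k tpar x else iter (i + j - k) tpar y.

Let walk_x k : k <= i -> walk k = iter k tpar x.
Proof. by rewrite /walk => ->. Qed.

Let walk_y k : i <= k -> k <= i + j -> walk k = iter (i + j - k) tpar y.
Proof.
move=> le_ik le_kj; rewrite /walk; case: (ltngtP k i) => [lt_ki | // | ->]; first lia.
by rewrite meet; congr (iter _ _ _); lia.
Qed.

Lemma meeting_long : 1 < i + j.
Proof.
rewrite ltnNge; apply/negP => le1; move: not_pc; rewrite adj_par_edges.
move: meet le_i le_j; rewrite -(dist_eq0 x) -(dist_eq0 y).
have [[-> ->] | [[-> ->] | [-> ->]]] :
    (i = 0 /\ j = 0) \/ (i = 1 /\ j = 0) \/ (i = 0 /\ j = 1) by lia.
- by move=> /= exy; move: (adj_tree_neq xy); rewrite exy eqxx.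
- by move=> /= <- dx _; rewrite -(lt0n (dist x)) dx eqxx orbT.
- by move=> /= -> _ dy; rewrite -(lt0n (dist y)) dy eqxx.
Qed.

Lemma meeting_uniq : uniq (mkseq walk (i + j).+1).
Proof.
rewrite map_inj_in_uniq ?iota_uniq // => k1 k2; rewrite !mem_iota !leq0n !add0n !ltnS /=.
wlog le12 : k1 k2 / k1 <= k2 => [sym le1 le2 e | le1 le2 e].
  by case: (leqP k1 k2) => [/sym | /ltnW /sym] ->.
case: (leqP k2 i) => [le2i | lt_i2].
  have le1i := leq_trans le12 le2i.
  by move: e; rewrite !walk_x // => /iter_tpar_inj; apply; apply: leq_trans le_i.
move: e; rewrite [walk k2](walk_y (ltnW lt_i2) le2); case: (leqP k1 i) => [le1i | lt_i1].
  have le_j2 : i + j - k2 <= dist y by lia.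
  by rewrite walk_x // => /(min_meet (leq_trans le1i le_i) le_j2); lia.
by rewrite walk_y ?(ltnW lt_i1) // => /iter_tpar_inj; lia.
Qed.

Lemma meeting_cycle : path.cycle (adj T) (mkseq walk (i + j).+1).
Proof.
rewrite /mkseq cycle_map; apply: cycle_iota => [k lt_k |] /=; last first.
  by rewrite (walk_x (leq0n i)) (walk_y (leq_addr j i) (leqnn _)) subnn adjC.
case: (ltnP k i) => [lt_ki | le_ik].
  rewrite !walk_x ?(ltnW lt_ki) // adjC; apply: iter_tpar_adj.
  exact: leq_trans lt_ki le_i.
rewrite !walk_y ?(leqW le_ik) ?(ltnW lt_k) //.
have -> : i + j - k = (i + j - k.+1).+1 by lia.
by apply: iter_tpar_adj; lia.
Qed.

Lemma meeting_absurd : False.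
Proof.
have [_ [_ acyclic]] := treeT.
move: (acyclic _ meeting_uniq).
by rewrite size_mkseq ltnS meeting_long meeting_cycle => /(_ isT).
Qed.

End MeetingCycle.

Lemma tree_adj_tpar (x y : V) : adj T x y -> adj (par_edges tpar) x y.
Proof.
move=> xy; apply/contraT => not_pc; exfalso.
pose meets m := [exists i : 'I_(dist x).+1, exists j : 'I_(dist y).+1,
  (i + j == m) && (iter i tpar x == iter j tpar y)].
have meet_ex : exists m, meets m.
  exists (dist x + dist y); apply/existsP; exists ord_max; apply/existsP; exists ord_max.
  by rewrite /= !iter_tpar_root !eqxx.
case: (ex_minnP meet_ex) => m /existsP [i /existsP [j /andP [/eqP ijm /eqP meet]]] min_m.
apply: (meeting_absurd xy not_pc (ltn_ord i) (ltn_ord j) meet) => i' j' le_i' le_j' meet'.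
rewrite ijm; apply: min_m; apply/existsP; exists (inord i').
by apply/existsP; exists (inord j'); rewrite !inordK ?ltnS // meet' !eqxx.
Qed.

Lemma par_edges_tpar : par_edges tpar = T.
Proof.
apply: eq_Gedge_sets (par_edges_Gedge rank_tpar) T_Gedge _ => u w.
apply/idP/idP => [|/tree_adj_tpar //]; rewrite adj_par_edges.
by case/orP => /andP [wn0 /eqP ->]; [|rewrite adjC]; case: (tpar_spec wn0).
Qed.

End SpanningTrees.

Local Open Scope ring_scope.

Theorem theorem3p3 (n : nat) (T : {set edge n}) (hT : is_spanning_tree T)
    (R : comRingType) (t : 'I_n -> R) :
  pY t (Gminus T) =
  \sum_(s : {perm 'I_n.+1} | is_Sn s)
     (-1) ^+ mm (Gminus T) s * Ccoef R T (Tpath s) * Ps t s.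
Proof.
have [s0 s0P] := linext_of_rank (rank_tpar hT).
have := linext_tree_expansion t s0P; rewrite /tree_expansion (par_edges_tpar hT) => ->.
rewrite big_mkcond [RHS]big_mkcond; apply: eq_bigr => s _.
case: (boolP (is_Sn s)) => [sn | nsn]; last first.
  by rewrite ifF //; apply: contraNF nsn => /andP [].
have := compatible_Tpath (rank_tpar hT) sn; rewrite (par_edges_tpar hT) => compatE.
rewrite /Ccoef; case: excluded_middle_informative => [compat | incompat].
  by rewrite (proj1 compatE compat) mulr1.
by rewrite ifF ?mulr0 ?mul0r //; apply/negP => /compatE.
Qed.
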